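(* Let $\mathcal{P}=(|K|,V)$ be a polyhedral model and $x_1,x_2\in|K|$. Then $x_1\equiv_\eta x_2$ if and only if $x_1\approx_\triangle x_2$.
   Context: Fix a set PL of proposition letters. A simplex $\sigma\subseteq\mathbb{R}^m$ is the convex hull of $d+1$ affinely independent points; its faces are the simplices spanned by nonempty subsets of its vertices; its relative interior (cell) is $\tilde\sigma=\{\sum_i\lambda_iv_i:\lambda_i\in(0,1],\sum_i\lambda_i=1\}$. A simplicial complex $K$ is a finite set of simplices in $\mathbb{R}^m$ closed under faces, any two of which intersect in a common face or in $\emptyset$. The polyhedron $|K|$ is the union of its simplices with the subspace topology; the cells partition $|K|$. A polyhedral model is $\mathcal{P}=(|K|,V)$ with $V:\mathrm{PL}\to\mathcal{P}(|K|)$, each $V(p)$ a union of cells. A topological path from $x$ is a continuous $\pi:[0,1]\to|K|$ with $\pi(0)=x$. SLCS$_\eta$ formulas: $\Phi::=p\mid\neg\Phi\mid\Phi_1\wedge\Phi_2\mid\eta(\Phi_1,\Phi_2)$; $x\models p$ iff $x\in V(p)$; negation, conjunction standard; $x\models\eta(\Phi_1,\Phi_2)$ iff some topological path $\pi$ from $x$ has $\pi(1)\models\Phi_2$ and $\pi(r)\models\Phi_1$ for all $r\in[0,1)$. $x_1\equiv_\eta x_2$ means $x_1,x_2$ satisfy the same SLCS$_\eta$ formulas. A weak simplicial bisimulation is a symmetric relation $B\subseteq|K|\times|K|$ such that whenever $B(x_1,x_2)$: (1) for all $p$, $x_1\in V(p)$ iff $x_2\in V(p)$; (2) for each topological path $\pi_1$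 from $x_1$ there is a topological path $\pi_2$ from $x_2$ with $B(\pi_1(1),\pi_2(1))$ and such that for all $r_2\in[0,1)$ there is $r_1\in[0,1)$ with $B(\pi_1(r_1),\pi_2(r_2))$. $x_1\approx_\triangle x_2$ iff some weak simplicial bisimulation contains $(x_1,x_2)$. *)

From HB Require Import structures.
From mathcomp Require Import all_boot all_order all_algebra.
From mathcomp Require Import finmap.
From mathcomp Require Import all_classical all_reals all_analysis.

Set Implicit Arguments.
Unset Strict Implicit.
Unset Printing Implicit Defensive.

Import Order.TTheory GRing.Theory Num.Theory.
Import numFieldNormedType.Exports.
Local Open Scope ring_scope.
Local Open Scope classical_set_scope.

Section Polyhedral.
Variables (R : realType) (m : nat).

Notation point := 'rV[R]_m.

(* a simplex is represented by its (finite, nonempty) set of vertices *)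
Definition aff_indep (S : {fset point}) : Prop :=
  forall l : point -> R,
    \sum_(v <- S) l v = 0 -> \sum_(v <- S) l v *: v = 0 ->
    forall v, v \in S -> l v = 0.

Definition is_simplex (S : {fset point}) : Prop :=
  S != fset0 /\ aff_indep S.

Definition hull (S : {fset point}) : set point :=
  [set x | exists l : point -> R,
     (forall v, v \in S -> 0 <= l v) /\ \sum_(v <- S) l v = 1 /\
     x = \sum_(v <- S) l v *: v].

Definition cell (S : {fset point}) : set point :=
  [set x | exists l : point -> R,
     (forall v, v \in S -> 0 < l v <= 1) /\ \sum_(v <- S) l v = 1 /\
     x = \sum_(v <- S) l v *: v].

Definition face (T S : {fset point}) : Prop := T != fset0 /\ fsubset T S.

Definition simplicial_complex (K : {fset {fset point}}) : Prop :=
  (forall S, S \in K -> is_simplex S) /\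
  (forall S T, S \in K -> face T S -> T \in K) /\
  (forall S T, S \in K -> T \in K ->
     hull S `&` hull T = set0 \/
     exists U, face U S /\ face U T /\ hull S `&` hull T = hull U).

Definition polyhedron (K : {fset {fset point}}) : set point :=
  [set x | exists2 S, S \in K & hull S x].

Variable PL : Type.

Definition polyhedral_model (K : {fset {fset point}}) (V : PL -> set point) : Prop :=
  simplicial_complex K /\
  forall p, exists A : {fset {fset point}}, fsubset A K /\
     V p = [set x | exists2 S, S \in A & cell S x].

Definition topo_path (K : {fset {fset point}}) (x : point) (pi : R -> point) : Prop :=
  {within `[0, 1], continuous pi} /\
  (forall r, 0 <= r <= 1 -> polyhedron K (pi r)) /\
  pi 0 = x.

Inductive form : Type :=
  | FAtom : PL -> form
  | FNeg : form -> form
  | FAnd : form -> form -> form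
  | FEta : form -> form -> form.

Fixpoint sat (K : {fset {fset point}}) (V : PL -> set point) (phi : form) (x : point) : Prop :=
  match phi with
  | FAtom p => V p x
  | FNeg f => ~ sat K V f x
  | FAnd f g => sat K V f x /\ sat K V g x
  | FEta f g => exists pi, topo_path K x pi /\ sat K V g (pi 1) /\
                  (forall r, 0 <= r < 1 -> sat K V f (pi r))
  end.

Definition logic_equiv K V (x1 x2 : point) : Prop :=
  forall phi, sat K V phi x1 <-> sat K V phi x2.

Definition weak_simplicial_bisim K (V : PL -> set point) (B : point -> point -> Prop) : Prop :=
  (forall x1 x2, B x1 x2 -> polyhedron K x1 /\ polyhedron K x2) /\
  (forall x1 x2, B x1 x2 -> B x2 x1) /\
  (forall x1 x2, B x1 x2 ->
     (forall p, V p x1 <-> V p x2) /\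
     (forall pi1, topo_path K x1 pi1 ->
        exists pi2, topo_path K x2 pi2 /\ B (pi1 1) (pi2 1) /\
          forall r2, 0 <= r2 < 1 -> exists r1, 0 <= r1 < 1 /\ B (pi1 r1) (pi2 r2))).

Definition weak_bisimilar K V (x1 x2 : point) : Prop :=
  exists B, weak_simplicial_bisim K V B /\ B x1 x2.

End Polyhedral.

(** Satisfaction of SLCS_eta formulas is constant on every cell: a path leaving
    a point [x] of a cell can be preceded by the straight segment, inside the
    cell, from any other point [y] of that cell to [x].  As the complex has
    finitely many cells, every point [y] then has a characteristic formula: the
    conjunction, over all cells, of a formula true at [y] and false on the cell
    whenever such a formula exists.  A point of [|K|] satisfies it exactly when
    it is logically equivalent to [y].  Logical equivalence is therefore a weak
    simplicial bisimulation: a path [pi1] from [x1] is described, at [x1], by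
    [eta] of the disjunction of the characteristic formulas of the points it
    visits before time 1 and the characteristic formula of its end point, and a
    witness of this formula at an equivalent point [x2] is the required path. *)
From Pilot Require Import Defs.
From HB Require Import structures.
From mathcomp Require Import all_boot all_order all_algebra.
From mathcomp Require Import finmap.
From mathcomp Require Import all_classical all_reals all_analysis.
From mathcomp Require Import lra.
Import Order.TTheory GRing.Theory Num.Theory.
Import numFieldNormedType.Exports.
Local Open Scope ring_scope.
Local Open Scope classical_set_scope.

Definition clamp01 {R : realType} (r : R) : R := Num.min 1 (Num.max 0 r).

Lemma continuous_clamp01 {R : realType} : continuous (@clamp01 R).
Proof.
move=> r; apply: (@continuous_min R R (fun=> 1) (Num.max 0)).
  exact: cst_continuous.
apply: (@continuous_max R R (fun=> 0) id); first exact: cst_continuous.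
by move=> ?; apply: cvg_id.
Qed.

Lemma clamp01_itv {R : realType} (r : R) : 0 <= clamp01 r <= 1.
Proof. by rewrite /clamp01 le_min ler01 le_max lexx ge_min lexx. Qed.

Lemma clamp01_id {R : realType} (r : R) : 0 <= r <= 1 -> clamp01 r = r.
Proof.
by move=> /andP[r0 r1]; rewrite /clamp01 minEle maxEle; case: ifP; case: ifP; lra.
Qed.

Lemma clamp01_le0 {R : realType} (r : R) : r <= 0 -> clamp01 r = 0.
Proof. by move=> r0; rewrite /clamp01 minEle maxEle; case: ifP; case: ifP; lra. Qed.

Lemma clamp01_ge1 {R : realType} (r : R) : 1 <= r -> clamp01 r = 1.
Proof. by move=> r1; rewrite /clamp01 minEle maxEle; case: ifP; case: ifP; lra. Qed.

Lemma continuous_comp_subspace {S T U : topologicalType}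
    {A : set T} {f : T -> U} {g : S -> T} :
  {within A, continuous f} -> continuous g -> (forall t, A (g t)) ->
  continuous (f \o g).
Proof.
move=> /subspace_continuousP cf cg gA t W /(cf _ (gA t)) fW.
have := cg t _ fW; rewrite /= nbhs_simpl /=.
by apply: filterS => s /(_ (gA s)).
Qed.

Section Cells.
Context {R : realType} {m : nat}.
Local Notation point := 'rV[R]_m.
Implicit Types (S U : {fset point}) (K : {fset {fset point}}) (x y : point).

Lemma cell_sub_hull S : cell S `<=` hull S.
Proof.
move=> x [l [l01 [l1 ->]]]; exists l; split=> // v vS.
by case/andP: (l01 v vS) => /ltW.
Qed.

Lemma cell_polyhedron {K S x} : S \in K -> cell S x -> polyhedron K x.
Proof. by move=> SK /cell_sub_hull; exists S. Qed.

Lemma cell_segment S x y t : cell S x -> cell S y -> 0 <= t <= 1 ->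
  cell S (x + t *: (y - x)).
Proof.
move=> [lx [Hx [Sx ->]]] [ly [Hy [Sy ->]]] /andP[t0 t1].
exists (fun v => lx v + t * (ly v - lx v)); split; [|split].
- move=> v vS; have /andP[a0 a1] := Hx v vS; have /andP[b0 b1] := Hy v vS.
  apply/andP; split; nra.
- rewrite big_split /= -mulr_sumr sumrB Sx Sy; lra.
- rewrite -sumrB scaler_sumr -big_split /=; apply: eq_bigr => v _.
  by rewrite scalerDl -scalerBl scalerA.
Qed.

Local Open Scope fset_scope.

Lemma bary_coords_unique {S} {l l' : point -> R} : aff_indep S ->
  \sum_(v <- S) l v = \sum_(v <- S) l' v ->
  \sum_(v <- S) l v *: v = \sum_(v <- S) l' v *: v ->
  forall v, v \in S -> l v = l' v.
Proof.
move=> indepS e1 e2 v vS; apply/eqP; rewrite -subr_eq0; apply/eqP.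
apply: (indepS (fun v => l v - l' v)) => //; first by rewrite sumrB e1 subrr.
by under eq_bigr => w _ do rewrite scalerBl; rewrite sumrB e2 subrr.
Qed.

Lemma big_fset_extend0 (Z : zmodType) S U (l : point -> R) (F : R -> point -> Z) :
  U `<=` S -> (forall v, F 0 v = 0) ->
  \sum_(v <- S) F (if v \in U then l v else 0) v = \sum_(v <- U) F (l v) v.
Proof.
move=> US F0; rewrite -(big_fset_incl _ US); last by move=> v _ /negbTE ->.
by rewrite big_seq [RHS]big_seq; apply: eq_bigr => v ->.
Qed.

(* Extending the coordinates of [x] in the face [U] by zero gives coordinates
   in [S], which must be the positive ones, so no vertex of [S] is missing. *)
Lemma cell_face_eq {S U x} : is_simplex S -> face U S -> cell S x -> hull U x -> S = U.
Proof.
move=> [_ indepS] [_ US] [l [l01 [l1 ->]]] [l' [_ [l'1 ex']]].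
apply/eqP; rewrite eqEfsubset US andbT; apply/fsubsetP => v vS.
apply/negPn/negP => vU.
pose l'' w := if w \in U then l' w else 0.
have e1 : \sum_(w <- S) l w = \sum_(w <- S) l'' w.
  by rewrite l1 (@big_fset_extend0 _ S U l' (fun a _ => a)).
have e2 : \sum_(w <- S) l w *: w = \sum_(w <- S) l'' w *: w.
  rewrite ex' (@big_fset_extend0 _ S U l' (fun a w => a *: w)) // => w.
  by rewrite scale0r.
have := bary_coords_unique indepS e1 e2 v vS; rewrite /l'' (negbTE vU).
by have /andP[/gt_eqF + _] := l01 v vS => /eqP.
Qed.

Lemma cell_unique {K S S' x} : simplicial_complex K -> S \in K -> S' \in K ->
  cell S x -> cell S' x -> S = S'.
Proof.
move=> [simplK [_ meetK]] SK S'K cx cx'.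
have hx : (hull S `&` hull S')%classic x by split; apply: cell_sub_hull.
case: (meetK S S' SK S'K) => [meet0|[U [fS [fS' meetU]]]]; first by rewrite meet0 in hx.
rewrite meetU in hx.
rewrite (cell_face_eq (simplK _ SK) fS cx hx).
by rewrite (cell_face_eq (simplK _ S'K) fS' cx' hx).
Qed.

(* The cell of [x] is spanned by the vertices with a nonzero coordinate. *)
Lemma polyhedron_cell {K x} : simplicial_complex K -> polyhedron K x ->
  exists2 T, T \in K & cell T x.
Proof.
move=> [_ [faceK _]] [S SK [l [l0 [l1 ex]]]].
pose T := [fset v in S | l v != 0].
have TS : T `<=` S by apply: fset_sub.
have l_out v : v \in S -> v \notin T -> l v = 0.
  by move=> vS; rewrite !inE /= vS /= negbK => /eqP.
have lT1 : \sum_(v <- T) l v = 1.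
  by rewrite (big_fset_incl _ TS) // => v vS vT; rewrite l_out.
have T0 : T != fset0.
  by apply: contra_eq_neq lT1 => ->; rewrite big_nil eq_sym oner_eq0.
exists T; first exact: (faceK S).
exists l; split; last first.
  by split=> //; rewrite ex (big_fset_incl _ TS) // => v vS vT; rewrite l_out // scale0r.
move=> v vT; have vS : v \in S by apply: (fsubsetP TS).
have lv0 : l v != 0 by move: vT; rewrite !inE /= => /andP[].
rewrite lt_def lv0 l0 //= -lT1 (big_fsetD1 _ vT) /= lerDl big_seq.
by apply: sumr_ge0 => w /fsetD1P[_ wT]; apply: l0; apply: (fsubsetP TS).
Qed.

End Cells.

Section PrependSegment.
Context {R : realType} {m : nat}.
Local Notation point := 'rV[R]_m.
Implicit Types (K : {fset {fset point}}) (S : {fset point}) (x y : point).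
Implicit Types (pi : R -> point).

(* Runs from [y] to [x] along the segment during [[0, 1/2]], then through [pi]
   at double speed. *)
Definition prepend_segment pi x y (r : R) : point :=
  pi (clamp01 (2 * r - 1)) + (1 - clamp01 (2 * r)) *: (y - x).

Lemma prepend_segment0 pi x y : pi 0 = x -> prepend_segment pi x y 0 = y.
Proof.
move=> pi0; rewrite /prepend_segment clamp01_le0; last lra.
by rewrite mulr0 clamp01_id ?lexx ?ler01 // subr0 scale1r pi0 addrC subrK.
Qed.

Lemma prepend_segment1 pi x y : prepend_segment pi x y 1 = pi 1.
Proof.
rewrite /prepend_segment mulr1 (_ : 2 - 1 = 1); last lra.
by rewrite clamp01_id ?lexx ?ler01 // clamp01_ge1 ?subrr ?scale0r ?addr0 //; lra.
Qed.

Lemma continuous_prepend_segment pi x y :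
  {within `[0, 1], continuous pi} -> continuous (prepend_segment pi x y).
Proof.
move=> cpi r.
have clamp_affine : continuous (fun s : R => clamp01 (2 * s - 1)).
  move=> s; have affine_s : {for s, continuous (fun t : R => 2 * t - 1)}.
    by apply: cvgB; [exact: mulrl_continuous | exact: cvg_cst].
  exact: (continuous_comp affine_s (@continuous_clamp01 R _)).
have clamp_in01 (s : R) : `[0, 1]%classic (clamp01 (2 * s - 1)).
  by rewrite /= in_itv clamp01_itv.
apply: cvgD; first exact: (continuous_comp_subspace cpi clamp_affine clamp_in01 r).
apply: cvgZr_tmp; apply: cvgB; first exact: cvg_cst.
exact: (continuous_comp (@mulrl_continuous R 2 r) (@continuous_clamp01 R _)).
Qed.

Lemma prepend_segment_cases {S pi x y r} :
  pi 0 = x -> cell S x -> cell S y -> 0 <= r <= 1 ->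
  cell S (prepend_segment pi x y r) \/
  exists2 r', 0 <= r' <= 1 /\ (r < 1 -> r' < 1) & prepend_segment pi x y r = pi r'.
Proof.
move=> pi0 cx cy /andP[r0 r1]; rewrite /prepend_segment.
have [r_half|r_half] := leP (2 * r) 1.
  left; rewrite clamp01_le0 ?pi0; last lra.
  apply: cell_segment => //; have /andP[c0 c1] := clamp01_itv (2 * r).
  by apply/andP; split; lra.
right; exists (2 * r - 1); first by split; lra.
rewrite clamp01_id; last lra.
by rewrite clamp01_ge1 ?subrr ?scale0r ?addr0 //; lra.
Qed.

Lemma prepend_segment_path K S pi x y : S \in K -> cell S x -> cell S y ->
  topo_path K x pi -> topo_path K y (prepend_segment pi x y).
Proof.
move=> SK cx cy [cpi [piK pi0]]; split; [|split].
- exact/continuous_subspaceT/continuous_prepend_segment.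
- move=> r r01.
  have [/(cell_polyhedron SK) //|[r' [r'01 _] ->]] := prepend_segment_cases pi0 cx cy r01.
  exact: piK.
- exact: prepend_segment0.
Qed.

End PrependSegment.

Section Satisfaction.
Context {R : realType} {m : nat} {PL : Type}.
Variables (K : {fset {fset 'rV[R]_m}}) (V : PL -> set 'rV[R]_m).
Local Notation point := 'rV[R]_m.
Local Notation sat := (sat K V).

Lemma sat_cell (phi : Defs.form PL) S (x y : point) : polyhedral_model K V ->
  S \in K -> cell S x -> cell S y -> sat phi x -> sat phi y.
Proof.
move=> [cplxK Vcells] SK.
elim: phi x y => [p|f IHf|f IHf g IHg|f IHf g IHg] x y cx cy /=.
- have [A [AK ->]] := Vcells p; move=> [S' S'A cx']; exists S' => //.
  by rewrite (cell_unique cplxK (fsubsetP AK _ S'A) SK cx' cx).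
- by move=> nfx fy; apply: nfx; apply: (IHf y x).
- by move=> [fx gx]; split; [apply: (IHf x y) | apply: (IHg x y)].
- move=> [pi [pix [g1 fr]]]; have pi0 : pi 0 = x by case: pix => _ [].
  exists (prepend_segment pi x y); split; first exact: prepend_segment_path SK cx cy pix.
  split; first by rewrite prepend_segment1.
  move=> r /andP[r0 r1]; have r01 : 0 <= r <= 1 by rewrite r0 ltW.
  have [cr|[r' [/andP[r'0 _] r'1] ->]] := prepend_segment_cases pi0 cx cy r01.
    by apply: (IHf x) => //; rewrite -pi0; apply: fr; rewrite lexx ltr01.
  by apply: fr; rewrite r'0 r'1.
Qed.

Lemma weak_bisim_sat B (phi : Defs.form PL) (x y : point) :
  weak_simplicial_bisim K V B -> B x y -> sat phi x -> sat phi y.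
Proof.
move=> [_ [Bsym Btransfer]].
elim: phi x y => [p|f IHf|f IHf g IHg|f IHf g IHg] x y Bxy /=.
- exact: (proj1 (Btransfer x y Bxy) p).1.
- by move=> nfx fy; apply: nfx; apply: (IHf y x (Bsym _ _ Bxy)).
- by move=> [fx gx]; split; [apply: (IHf x y) | apply: (IHg x y)].
- move=> [pi [pix [g1 fr]]].
  have [pi2 [piy [B1 Br]]] := (Btransfer x y Bxy).2 pi pix.
  exists pi2; split=> //; split; first exact: IHg B1 g1.
  by move=> r2 /Br [r1 [r1_01 Br1]]; apply: IHf Br1 (fr r1 r1_01).
Qed.

Lemma not_logic_equiv_sat (x y : point) : ~ logic_equiv K V x y ->
  exists phi : Defs.form PL, sat phi x /\ ~ sat phi y.
Proof.
move=> neq; apply: contrapT => no_sep; apply: neq => phi; split => phix.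
  by apply: contrapT => nphiy; apply: no_sep; exists phi.
by apply: contrapT => nphix; apply: no_sep; exists (FNeg phi); split=> //= /(_ phix).
Qed.

End Satisfaction.

Definition logic_equiv_in {R : realType} {m : nat} {PL : Type}
    (K : {fset {fset 'rV[R]_m}}) (V : PL -> set 'rV[R]_m) (x y : 'rV[R]_m) : Prop :=
  polyhedron K x /\ polyhedron K y /\ logic_equiv K V x y.

Section CharacteristicFormula.
Context {R : realType} {m : nat} {PL : Type}.
Variables (K : {fset {fset 'rV[R]_m}}) (V : PL -> set 'rV[R]_m).
Hypothesis pmKV : polyhedral_model K V.
Variable p0 : PL.
Local Notation point := 'rV[R]_m.
Local Notation sat := (sat K V).

(* The logic has no truth constant; it is built from an atom, which is why
   the case without proposition letters is treated separately. *)
Definition FTrue : Defs.form PL := FNeg (FAnd (FAtom p0) (FNeg (FAtom p0))).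
Definition FFalse : Defs.form PL := FNeg FTrue.
Definition FOr (f g : Defs.form PL) : Defs.form PL := FNeg (FAnd (FNeg f) (FNeg g)).
Definition FAnds {T : Type} (s : seq T) (F : T -> Defs.form PL) : Defs.form PL :=
  foldr (fun t acc => FAnd (F t) acc) FTrue s.
Definition FOrs {T : Type} (s : seq T) (F : T -> Defs.form PL) : Defs.form PL :=
  foldr (fun t acc => FOr (F t) acc) FFalse s.

Lemma sat_FTrue (x : point) : sat FTrue x.
Proof. by move=> /= []. Qed.

Lemma sat_FAnds (T : eqType) (s : seq T) F (x : point) :
  sat (FAnds s F) x <-> forall t, t \in s -> sat (F t) x.
Proof.
elim: s => [|t s IH] /=; first by split=> // _; apply: sat_FTrue.
split; first by move=> [Ft /IH Fs] u; rewrite inE => /predU1P[-> //|]; apply: Fs.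
move=> Fts; split; first by apply: Fts; rewrite inE eqxx.
by apply/IH => u us; apply: Fts; rewrite inE us orbT.
Qed.

Lemma sat_FOrs (T : eqType) (s : seq T) F (x : point) :
  sat (FOrs s F) x <-> exists2 t, t \in s & sat (F t) x.
Proof.
elim: s => [|t s IH] /=; first by split=> [/(_ (sat_FTrue x))|[]].
split=> [not_neither|[u]].
  have [Ft|nFt] := pselect (sat (F t) x); first by exists t; rewrite ?inE ?eqxx.
  have [/IH [u us Fu]|nFs] := pselect (sat (FOrs s F) x).
    by exists u; rewrite // inE us orbT.
  by case: not_neither.
rewrite inE => /predU1P[-> Ft [nFt _]|us Fu [_ nFs]]; first exact: nFt.
by apply: nFs; apply/IH; exists u.
Qed.

Definition separates (y : point) S (phi : Defs.form PL) : Prop :=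
  sat phi y /\ forall z, cell S z -> ~ sat phi z.

Definition separator (y : point) S : Defs.form PL :=
  if pselect (exists phi, separates y S phi) is left ex
  then projT1 (cid ex) else FTrue.

Lemma sat_separator y S : sat (separator y S) y.
Proof.
rewrite /separator; case: pselect => [ex|_]; last exact: sat_FTrue.
by case: (projT2 (cid ex)).
Qed.

Lemma separator_separates {y S phi} :
  separates y S phi -> separates y S (separator y S).
Proof.
move=> sep; rewrite /separator; case: pselect => [ex|[]]; last by exists phi.
exact: projT2 (cid ex).
Qed.

Definition charform (y : point) : Defs.form PL := FAnds (enum_fset K) (separator y).

Lemma sat_charform y : sat (charform y) y.
Proof. by apply/sat_FAnds => S _; apply: sat_separator. Qed.

Lemma charform_logic_equiv y z :
  polyhedron K z -> sat (charform y) z -> logic_equiv K V y z.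
Proof.
move=> zK chi_z; apply: contrapT => /not_logic_equiv_sat [phi [phiy nphiz]].
have [T TK cz] := polyhedron_cell pmKV.1 zK.
have sepT : separates y T phi.
  by split=> // w cw phiw; apply: nphiz; apply: sat_cell pmKV TK cw cz phiw.
have [_ /(_ z cz)] := separator_separates sepT; apply.
exact: (sat_FAnds _ _ _ _).1 chi_z T TK.
Qed.

Definition visit_charform (pi : R -> point) S : Defs.form PL :=
  if pselect (exists r, 0 <= r < 1 /\ cell S (pi r)) is left ex
  then charform (pi (projT1 (cid ex))) else FFalse.

Definition path_formula (pi : R -> point) : Defs.form PL :=
  FEta (FOrs (enum_fset K) (visit_charform pi)) (charform (pi 1)).

Lemma sat_path_formula {x pi} : topo_path K x pi -> sat (path_formula pi) x.
Proof.
move=> pix; have [_ [piK _]] := pix.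
exists pi; split=> //; split=> [|r /andP[r0 r1]]; first exact: sat_charform.
have [T TK cT] := polyhedron_cell pmKV.1 (piK r (andb_true_intro (conj r0 (ltW r1)))).
apply/sat_FOrs; exists T => //; rewrite /visit_charform.
case: pselect => [ex|[]]; last by exists r; rewrite r0 r1.
have [_ cT'] := projT2 (cid ex).
exact: sat_cell pmKV TK cT' cT (sat_charform _).
Qed.

Lemma sat_visit_charform {z pi} : polyhedron K z ->
  sat (FOrs (enum_fset K) (visit_charform pi)) z ->
  exists r, 0 <= r < 1 /\ logic_equiv K V (pi r) z.
Proof.
move=> zK /sat_FOrs [S _]; rewrite /visit_charform.
case: pselect => [ex|_]; last by case; apply: sat_FTrue.
have [r01 _] := projT2 (cid ex).
by move=> chi_z; exists (projT1 (cid ex)); split=> //; apply: charform_logic_equiv.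
Qed.

Lemma logic_equiv_in_transfer_atom x1 x2 pi1 :
  logic_equiv_in K V x1 x2 -> topo_path K x1 pi1 ->
  exists pi2, topo_path K x2 pi2 /\ logic_equiv_in K V (pi1 1) (pi2 1) /\
    forall r2, 0 <= r2 < 1 ->
      exists r1, 0 <= r1 < 1 /\ logic_equiv_in K V (pi1 r1) (pi2 r2).
Proof.
move=> [_ [_ equiv12]] pi1x1; have [_ [pi1K _]] := pi1x1.
have [pi2 [pi2x2 [chi1 visits]]] := (equiv12 _).1 (sat_path_formula pi1x1).
have [_ [pi2K _]] := pi2x2.
have pi1_01 r : 0 <= r < 1 -> polyhedron K (pi1 r).
  by move=> /andP[r0 /ltW r1]; apply: pi1K; rewrite r0 r1.
have pi2_01 r : 0 <= r < 1 -> polyhedron K (pi2 r).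
  by move=> /andP[r0 /ltW r1]; apply: pi2K; rewrite r0 r1.
have pi2_1 : polyhedron K (pi2 1) by apply: pi2K; rewrite ler01 lexx.
exists pi2; split=> //; split.
  by split; [apply: pi1K; rewrite ler01 lexx | split=> //; apply: charform_logic_equiv].
move=> r2 r2_01.
have [r1 [r1_01 equiv_r]] := sat_visit_charform (pi2_01 _ r2_01) (visits r2 r2_01).
by exists r1; split=> //; split; [exact: pi1_01 | split; [exact: pi2_01 |]].
Qed.

End CharacteristicFormula.

Lemma form_inhabited (PL : Type) : Defs.form PL -> inhabited PL.
Proof. by elim=> [p|f //|f //|f //]; exists. Qed.

Section LogicalEquivalenceIsBisimulation.
Context {R : realType} {m : nat} {PL : Type}.
Variables (K : {fset {fset 'rV[R]_m}}) (V : PL -> set 'rV[R]_m).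
Hypothesis pmKV : polyhedral_model K V.

(* Without proposition letters there are no formulas, and the constant path
   at [x2] answers every path from [x1]. *)
Lemma logic_equiv_in_transfer x1 x2 pi1 :
  logic_equiv_in K V x1 x2 -> topo_path K x1 pi1 ->
  exists pi2, topo_path K x2 pi2 /\ logic_equiv_in K V (pi1 1) (pi2 1) /\
    forall r2, 0 <= r2 < 1 ->
      exists r1, 0 <= r1 < 1 /\ logic_equiv_in K V (pi1 r1) (pi2 r2).
Proof.
have [[p0]|noPL] := pselect (inhabited PL).
  exact: (logic_equiv_in_transfer_atom K V pmKV p0 x1 x2 pi1).
move=> [x1K [x2K _]] [_ [pi1K pi10]].
have equiv_any y z : logic_equiv K V y z.
  by move=> phi; case: noPL; apply: form_inhabited phi.
exists (fun=> x2); split.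
  by split; [apply: continuous_subspaceT => r; apply: cvg_cst | split].
split; first by split; [apply: pi1K; rewrite ler01 lexx | split=> //; apply: equiv_any].
move=> r2 _; exists 0; rewrite lexx ltr01 pi10.
by do 3!split=> //; apply: equiv_any.
Qed.

Lemma logic_equiv_in_bisim : weak_simplicial_bisim K V (logic_equiv_in K V).
Proof.
split; first by move=> x1 x2 [x1K [x2K _]].
split.
  by move=> x1 x2 [x1K [x2K equiv12]]; do 2!split=> //; move=> phi; split=> /equiv12.
move=> x1 x2 equiv12; split; last by move=> pi1; apply: logic_equiv_in_transfer.
by move=> p; have [_ [_ /(_ (FAtom p))]] := equiv12.
Qed.

End LogicalEquivalenceIsBisimulation.

Theorem theorem2 (R : realType) (m : nat) (PL : Type)
  (K : {fset {fset 'rV[R]_m}}) (V : PL -> set 'rV[R]_m)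
  (x1 x2 : 'rV[R]_m) :
  polyhedral_model K V ->
  polyhedron K x1 -> polyhedron K x2 ->
  (logic_equiv K V x1 x2 <-> weak_bisimilar K V x1 x2).
Proof.
move=> pmKV x1K x2K; split=> [equiv12|[B [bisimB Bx12]] phi].
  by exists (logic_equiv_in K V); split; [exact: logic_equiv_in_bisim | split].
have Bx21 : B x2 x1 by case: bisimB => _ [Bsym _]; apply: Bsym.
by split; apply: weak_bisim_sat bisimB _.
Qed.
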